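(* Let $\alpha\in\mathbb{R}$ not be a negative integer, let $n\in\mathbb{N}=\{1,2,\dots\}$ and $0\le i\le n-1$. Then on $(0,\infty)$ the function $$t\mapsto \sum_{k=0}^i\frac{(-1)^k}{(i-k)!}\,t^{i-k}\,\ell_{n-1-k}^{(\alpha+1+k)}(t)$$ is an antiderivative of $t\mapsto \frac{t^i}{i!}\ell_n^{(\alpha)}(t)$, i.e. $\int \frac{t^i}{i!}\ell_n^{(\alpha)}(t)\,dt=\sum_{k=0}^i\frac{(-1)^k}{(i-k)!}t^{i-k}\ell_{n-1-k}^{(\alpha+1+k)}(t)$.
   Context: The generalized Laguerre polynomials are $L_n^{(\alpha)}(t)=\sum_{k=0}^n(-1)^k\binom{n+\alpha}{n-k}\frac{t^k}{k!}$, and the Laguerre functions are $\ell_n^{(\alpha)}(t)=\frac{n!}{\Gamma(n+\alpha+1)}t^{\alpha}e^{-t}L_n^{(\alpha)}(t)$ for $t>0$ (defined for $\alpha\neq-1,-2,\dots$). *)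

From Stdlib Require Import Reals Factorial.
From Coquelicot Require Import Coquelicot.
Open Scope R_scope.

Fixpoint falling (x : R) (m : nat) : R :=
  match m with
  | O => 1
  | S m' => falling x m' * (x - INR m')
  end.

Definition gbinom (x : R) (m : nat) : R := falling x m / INR (Factorial.fact m).

(* Euler's Gamma function, via the Gauss product formula
   Gamma(x) = lim_m m! m^x / (x (x+1) ... (x+m)),
   valid for all real x that are not nonpositive integers. *)
Fixpoint rising (x : R) (m : nat) : R :=
  match m with
  | O => 1
  | S m' => rising x m' * (x + INR m')
  end.

Definition Gamma (x : R) : R :=
  real (Lim_seq (fun m => INR (Factorial.fact m) * Rpower (INR m) x / rising x (S m))).

Definition laguerreL (n : nat) (a t : R) : R :=
  sum_f_R0 (fun k => (-1) ^ k * gbinom (INR n + a) (n - k) * t ^ k / INR (Factorial.fact k)) n.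

Definition laguerre_fun (n : nat) (a t : R) : R :=
  INR (Factorial.fact n) / Gamma (INR n + a + 1) * Rpower t a * exp (- t) * laguerreL n a t.

(* The whole statement rests on the lowering rule
     d/dt l_m^(b+1)(t) = l_(m+1)^(b)(t),
   which holds because the Gamma normalisations of both sides coincide, so that
   it reduces to the polynomial identity
     (b + 1 - t) L_m^(b+1)(t) + t (L_m^(b+1))'(t) = (m + 1) L_(m+1)^(b)(t),
   checked coefficientwise with (j + 1) binom(x, j + 1) = (x - j) binom(x, j).
   By the product rule, the derivative of the k-th summand of the antiderivative
   is then  u_k + v_k, where v_k is its monomial times l_(n-k)^(a+k) and u_k comes
   from differentiating t^(i-k)/(i-k)!; since u_k = - v_(k+1), the sum
   telescopes to v_0 = t^i/i! l_n^(a)(t). *)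
From Stdlib Require Import Reals Lia Lra Factorial.
From Coquelicot Require Import Coquelicot.
Open Scope R_scope.

Lemma is_derive_Rmult (f g : R -> R) (x df dg : R) :
  is_derive f x df -> is_derive g x dg ->
  is_derive (fun s => f s * g s) x (df * g x + f x * dg).
Proof. intros Hf Hg; apply (is_derive_mult f g x df dg Hf Hg), Rmult_comm. Qed.

Lemma is_derive_sum_f_R0 (f : nat -> R -> R) (df : nat -> R) (x : R) (M : nat) :
  (forall k, (k <= M)%nat -> is_derive (f k) x (df k)) ->
  is_derive (fun s => sum_f_R0 (fun k => f k s) M) x (sum_f_R0 df M).
Proof.
  induction M as [|M IH]; intros Hd; simpl.
  - apply Hd; lia.
  - apply (is_derive_plus (fun s => sum_f_R0 (fun k => f k s) M) (f (S M))).
    + apply IH; intros; apply Hd; lia.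
    + apply Hd; lia.
Qed.

Lemma is_derive_scal_pow (c x : R) (j : nat) :
  is_derive (fun s => c * s ^ j) x (c * (INR j * x ^ pred j)).
Proof.
  apply is_derive_scal.
  replace (INR j * x ^ pred j) with (INR j * 1 * x ^ pred j) by ring.
  exact (is_derive_pow (fun s => s) j x 1 (is_derive_id x)).
Qed.

Lemma is_derive_poly (c : nat -> R) (x : R) (M : nat) :
  is_derive (fun s => sum_f_R0 (fun k => c k * s ^ k) M) x
    (sum_f_R0 (fun k => c k * (INR k * x ^ pred k)) M).
Proof.
  apply (is_derive_sum_f_R0 (fun k s => c k * s ^ k)); intros k _.
  apply is_derive_scal_pow.
Qed.

Lemma sum_f_R0_shift_pow (a c D : nat -> R) (t : R) (M : nat) :
  D 0%nat = a 0%nat ->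
  (forall k, (k < M)%nat -> D (S k) = a (S k) - c k) ->
  sum_f_R0 (fun k => a k * t ^ k - c k * t ^ S k) M
  = sum_f_R0 (fun k => D k * t ^ k) M - c M * t ^ S M.
Proof.
  intros HD0 HDS; induction M as [|M IH].
  - simpl; rewrite HD0; ring.
  - rewrite !tech5, IH by (intros; apply HDS; lia).
    rewrite HDS by lia; simpl; ring.
Qed.

Lemma sum_f_R0_telescope (u v : nat -> R) (M : nat) :
  (forall k, (k < M)%nat -> u k = - v (S k)) ->
  sum_f_R0 (fun k => u k + v k) M = v 0%nat + u M.
Proof.
  intros Huv; induction M as [|M IH].
  - simpl; ring.
  - rewrite tech5, IH by (intros; apply Huv; lia).
    rewrite Huv by lia; ring.
Qed.

Lemma gbinom_0 (x : R) : gbinom x 0 = 1.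
Proof. unfold gbinom; simpl; field. Qed.

Lemma gbinom_succ (x : R) (j : nat) :
  INR (S j) * gbinom x (S j) = (x - INR j) * gbinom x j.
Proof.
  unfold gbinom; simpl falling; rewrite fact_simpl, mult_INR.
  field; split; [apply INR_fact_neq_0 | apply not_0_INR; lia].
Qed.

Definition laguerre_coef (m : nat) (a : R) (k : nat) : R :=
  (-1) ^ k * gbinom (INR m + a) (m - k) / INR (fact k).

Lemma laguerreL_coefE (m : nat) (a t : R) :
  laguerreL m a t = sum_f_R0 (fun k => laguerre_coef m a k * t ^ k) m.
Proof.
  apply sum_eq; intros k _; unfold laguerre_coef.
  field; apply INR_fact_neq_0.
Qed.

Lemma is_derive_laguerreL (m : nat) (a t : R) :
  is_derive (laguerreL m a) t
    (sum_f_R0 (fun k => laguerre_coef m a k * (INR k * t ^ pred k)) m).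
Proof.
  apply (is_derive_ext (fun s => sum_f_R0 (fun k => laguerre_coef m a k * s ^ k) m)).
  - intro s; symmetry; apply laguerreL_coefE.
  - apply is_derive_poly.
Qed.

Lemma INR_succ_add (m : nat) (b : R) : INR (S m) + b = INR m + (b + 1).
Proof. rewrite S_INR; ring. Qed.

Lemma laguerre_coef_lower_0 (m : nat) (b : R) :
  INR (S m) * laguerre_coef (S m) b 0 = (b + 1 + INR 0) * laguerre_coef m (b + 1) 0.
Proof.
  unfold laguerre_coef; rewrite !Nat.sub_0_r, INR_succ_add.
  replace (INR (S m) * ((-1) ^ 0 * gbinom (INR m + (b + 1)) (S m) / INR (fact 0)))
    with (INR (S m) * gbinom (INR m + (b + 1)) (S m)) by (simpl; field).
  rewrite gbinom_succ; simpl; field.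
Qed.

Lemma laguerre_coef_lower_succ (m k : nat) (b : R) : (k < m)%nat ->
  INR (S m) * laguerre_coef (S m) b (S k)
  = (b + 1 + INR (S k)) * laguerre_coef m (b + 1) (S k) - laguerre_coef m (b + 1) k.
Proof.
  intros Hk; destruct (Nat.le_exists_sub (S k) m Hk) as [j [-> _]].
  unfold laguerre_coef; rewrite INR_succ_add.
  replace (S (j + S k) - S k)%nat with (S j) by lia.
  replace (j + S k - S k)%nat with j by lia.
  replace (j + S k - k)%nat with (S j) by lia.
  set (G := gbinom (INR (j + S k) + (b + 1))).
  assert (HG : (b + 1 + INR (S k)) * G j = INR (S j) * G (S j)).
  { unfold G; rewrite gbinom_succ, plus_INR; ring. }
  replace ((b + 1 + INR (S k)) * ((-1) ^ S k * G j / INR (fact (S k))))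
    with ((-1) ^ S k / INR (fact (S k)) * ((b + 1 + INR (S k)) * G j)) by (unfold Rdiv; ring).
  rewrite HG, fact_simpl, mult_INR; repeat rewrite ?S_INR, ?plus_INR; simpl pow.
  field; split; [apply INR_fact_neq_0 | pose proof (pos_INR k); lra].
Qed.

Lemma laguerre_coef_lower_top (m : nat) (b : R) :
  INR (S m) * laguerre_coef (S m) b (S m) = - laguerre_coef m (b + 1) m.
Proof.
  unfold laguerre_coef; rewrite !Nat.sub_diag, !gbinom_0, fact_simpl, mult_INR; simpl pow.
  field; split; [apply INR_fact_neq_0 | apply not_0_INR; lia].
Qed.

Lemma laguerreL_lower (m : nat) (b t : R) :
  (b + 1 - t) * laguerreL m (b + 1) t
  + t * sum_f_R0 (fun k => laguerre_coef m (b + 1) k * (INR k * t ^ pred k)) m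
  = INR (S m) * laguerreL (S m) b t.
Proof.
  set (c := laguerre_coef m (b + 1)).
  transitivity (sum_f_R0 (fun k => (b + 1 + INR k) * c k * t ^ k - c k * t ^ S k) m).
  { rewrite laguerreL_coefE, !scal_sum, <- plus_sum.
    unfold c; apply sum_eq; intros [|k] _; rewrite ?S_INR; cbn [pred pow INR]; ring. }
  rewrite (sum_f_R0_shift_pow (fun k => (b + 1 + INR k) * c k) c
             (fun k => INR (S m) * laguerre_coef (S m) b k)).
  - rewrite laguerreL_coefE, scal_sum, tech5.
    replace (laguerre_coef (S m) b (S m) * t ^ S m * INR (S m)) with (- c m * t ^ S m)
      by (unfold c; rewrite <- laguerre_coef_lower_top; ring).
    unfold Rminus; f_equal; [apply sum_eq; intros; ring | ring].
  - apply laguerre_coef_lower_0.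
  - intros k Hk; apply laguerre_coef_lower_succ, Hk.
Qed.

Lemma is_derive_exp_neg (t : R) : is_derive (fun s => exp (- s)) t (- exp (- t)).
Proof. auto_derive; [trivial | ring]. Qed.

(* No property of Gamma is needed: both sides carry the factor 1 / Gamma (m + b + 2). *)
Lemma is_derive_laguerre_fun (m : nat) (b t : R) : 0 < t ->
  is_derive (laguerre_fun m (b + 1)) t (laguerre_fun (S m) b t).
Proof.
  intros Ht.
  set (K := INR (fact m) / Gamma (INR m + (b + 1) + 1)).
  assert (Hpow : is_derive (fun s => K * Rpower s (b + 1)) t (K * ((b + 1) * Rpower t b))).
  { apply is_derive_scal, is_derive_Reals.
    replace b with (b + 1 - 1) at 2 by ring.
    apply derivable_pt_lim_power, Ht. }
  pose proof (is_derive_Rmult _ _ _ _ _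
    (is_derive_Rmult _ _ _ _ _ Hpow (is_derive_exp_neg t))
    (is_derive_laguerreL m (b + 1) t)) as HL.
  unfold laguerre_fun at 1; fold K.
  refine (@eq_ind R _ (is_derive _ t) HL _ _).
  unfold laguerre_fun, K.
  rewrite fact_simpl, mult_INR, INR_succ_add, Rpower_plus, Rpower_1 by exact Ht.
  transitivity (INR (fact m) / Gamma (INR m + (b + 1) + 1) * Rpower t b * exp (- t)
                * (INR (S m) * laguerreL (S m) b t)); [| unfold Rdiv; ring].
  rewrite <- laguerreL_lower; unfold Rdiv; ring.
Qed.

Theorem lemma2p2 (a : R) (n i : nat) :
  (forall m : nat, a <> - INR (S m)) ->
  (1 <= n)%nat -> (i <= n - 1)%nat ->
  forall t : R, 0 < t ->
    is_derive
      (fun s => sum_f_R0 (fun k =>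
          (-1) ^ k / INR (Factorial.fact (i - k)) * s ^ (i - k)
          * laguerre_fun (n - 1 - k) (a + 1 + INR k) s) i)
      t
      (t ^ i / INR (Factorial.fact i) * laguerre_fun n a t).
Proof.
  intros _ Hn Hi t Ht.
  set (w k := (-1) ^ k / INR (fact (i - k))).
  set (u k := w k * (INR (i - k) * t ^ pred (i - k)) * laguerre_fun (n - 1 - k) (a + 1 + INR k) t).
  set (v k := w k * t ^ (i - k) * laguerre_fun (S (n - 1 - k)) (a + INR k) t).
  refine (@eq_ind R _ (is_derive _ t) (is_derive_sum_f_R0 _ (fun k => u k + v k) t i _) _ _).
  - intros k _; unfold u, v.
    replace (a + 1 + INR k) with (a + INR k + 1) by ring.
    exact (is_derive_Rmult _ _ _ _ _ (is_derive_scal_pow (w k) t (i - k))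
             (is_derive_laguerre_fun (n - 1 - k) (a + INR k) t Ht)).
  - rewrite sum_f_R0_telescope.
    + unfold u, v, w; rewrite Nat.sub_diag, !Nat.sub_0_r, Rplus_0_r.
      replace (S (n - 1)) with n by lia.
      simpl; unfold Rdiv; ring.
    + intros k Hk; unfold u, v, w.
      replace (i - k)%nat with (S (i - S k)) by lia.
      replace (S (n - 1 - S k)) with (n - 1 - k)%nat by lia.
      replace (a + INR (S k)) with (a + 1 + INR k) by (rewrite S_INR; ring).
      rewrite fact_simpl, mult_INR; cbn [pred pow].
      field; split; [apply INR_fact_neq_0 | apply not_0_INR; lia].
Qed.
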